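(* If $\mathbb{M}$ is an implicitization matrix of $\phi$ and $\phi$ is not birational, then $\det(\mathbb{M})=c\,F^\delta$ with $c\in\mathbb{K}\setminus\{0\}$ and $\delta>1$.
   Context: $\mathbb{K}$ is a field of characteristic zero. $\phi:\mathbb{P}^2\dashrightarrow\mathbb{P}^3$, $\mathbf{t}=(t_1:t_2:t_3)\mapsto (p_1(\mathbf{t}):\dots:p_4(\mathbf{t}))$, with $p_i\in\mathbb{K}[t_1,t_2,t_3]$ homogeneous of the same degree, $\phi$ generically finite, so the closure of its image is an irreducible surface $S\subset\mathbb{P}^3$. $F\in\mathbb{K}[X_1,\dots,X_4]$ is the implicit equation of $S$ (irreducible homogeneous of minimal degree with $F(p_1,\dots,p_4)\equiv0$). $\phi$ is birational iff $[\mathbb{K}(\mathbb{P}^2):\mathbb{K}(S)]=1$, where $\mathbb{K}(S)\hookrightarrow\mathbb{K}(\mathbb{P}^2)$ via $f\mapsto f\circ\phi$. A moving surface of bi-degree $(m;n)$ ($m,n\ge1$) is a polynomial bihomogeneous of degree $m$ in $\mathbf{t}$ and $n$ in $\underline{X}=(X_1,\dots,X_4)$; it follows $\phi$ if it vanishes identically after substituting $X_i=p_i(\mathbf{t})$. An implicitization matrix of $\phi$ is a square $d\times d$ matrix $\mathbb{M}$ with entries in $\mathbb{K}[\underline{X}]$ such that: (1) there exist $m\ge1$ and distinct monomials $\mathbf{t}^{\alpha_1},\dots,\mathbf{t}^{\alpha_d}$ of degree $m$ (indexing the rows) with ${}^t\mathbb{M}(\mathbf{t}^{\alpha_1},\dots,\mathbf{t}^{\alpha_d})^t=(P(\mathbf{t};\underline{X}),M_1,\dots,M_{d-1})^t$,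 where each $M_i$ is a moving surface of bi-degree $(m;d_i)$ following $\phi$ and $P$ is a bihomogeneous polynomial of positive degree in $\underline{X}$, and there exist $\mathbf{t}^{\beta_1},\mathbf{t}^{\beta_2},\mathbf{t}^{\beta_3}$ among the $\mathbf{t}^{\alpha_i}$ with $t_1\mathbf{t}^{\beta_3}=t_3\mathbf{t}^{\beta_1}$ and $t_2\mathbf{t}^{\beta_3}=t_3\mathbf{t}^{\beta_2}$; (2) $\det(\mathbb{M})=c\,F^\delta$ with $\delta\ge1$ an integer and $c\in\mathbb{K}\setminus\{0\}$; (3) if $\phi$ is birational then $\delta=1$. *)

From HB Require Import structures.
From mathcomp Require Import all_boot all_order all_algebra.
From mathcomp Require Import mpoly.

Set Implicit Arguments.
Unset Strict Implicit.
Unset Printing Implicit Defensive.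

Import Order.TTheory GRing.Theory.
Local Open Scope ring_scope.

(* Conventions.
   - t = (t1,t2,t3) are the variables of {mpoly K[3]} (indices 0,1,2);
     X = (X1,..,X4) are the variables of {mpoly K[4]} (indices 0..3).
   - The parametrization phi is given by the 4-tuple p of polynomials in t.
   - Polynomials in (t ; X) are represented as {mpoly {mpoly K[4]}[3]}:
     polynomials in t with coefficients in K[X]. *)

Section Implicitization.
Variable K : fieldType.

Notation Kt := {mpoly K[3]}.
Notation KX := {mpoly K[4]}.
Notation KtX := {mpoly {mpoly K[4]}[3]}.

Definition t1 : Kt := 'X_(inord 0).
Definition t2 : Kt := 'X_(inord 1).
Definition t3 : Kt := 'X_(inord 2).

Definition substX (p : 4.-tuple Kt) (G : KX) : Kt := G \mPo p.

(* B(t ; p_1(t),...,p_4(t)) for B in K[t;X] *)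
Definition substTX (p : 4.-tuple Kt) (B : KtX) : Kt :=
  mmap (fun c : KX => substX p c) (fun i : 'I_3 => 'X_i) B.

Definition same_degree_homog (p : 4.-tuple Kt) : Prop :=
  exists dp : nat, forall i : 'I_4, tnth p i \is dp.-homog.

(* phi is generically finite: K(t1,t2,t3) is algebraic (hence finite) over
   K(p1,...,p4): each t_j is a root of a nonzero polynomial with
   coefficients in K[p1,...,p4]. *)
Definition generically_finite (p : 4.-tuple Kt) : Prop :=
  forall j : 'I_3, exists Q : {poly KX},
    map_poly (substX p) Q != 0 /\ (map_poly (substX p) Q).['X_j] = 0.

(* irreducibility in K[X] (units of K[X] are the nonzero constants) *)
Definition mirreducible (F : KX) : Prop :=
  (1 < msize F)%N /\
  forall G H : KX, F = G * H -> (msize G <= 1)%N \/ (msize H <= 1)%N.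

Definition implicit_equation (p : 4.-tuple Kt) (F : KX) : Prop :=
  mirreducible F /\
  exists dF : nat, F \is dF.-homog /\ substX p F = 0 /\
    forall (G : KX) (e : nat), G != 0 -> G \is e.-homog -> substX p G = 0 ->
      (dF <= e)%N.

(* phi is birational: [K(P^2) : K(S)] = 1, i.e. the embedding
   K(S) -> K(P^2), G/H |-> G(p)/H(p), is onto: every rational function a/b
   on P^2 (a, b homogeneous of the same degree, b <> 0) is of the form
   G(p)/H(p) with G, H homogeneous of the same degree and H not vanishing
   on S (H(p) <> 0). *)
Definition birational (p : 4.-tuple Kt) : Prop :=
  forall (a b : Kt) (e : nat), a \is e.-homog -> b \is e.-homog -> b != 0 ->
    exists (G H : KX) (e' : nat),
      [/\ G \is e'.-homog, H \is e'.-homog, substX p H != 0 &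
          a * substX p H = b * substX p G].

Definition bihomog (m e : nat) (B : KtX) : Prop :=
  B \is m.-homog /\ forall mon : 'X_{1..3}, B@_mon \is e.-homog.

Definition moving_surface_following (p : 4.-tuple Kt) (m e : nat) (B : KtX)
  : Prop :=
  [/\ (1 <= m)%N, (1 <= e)%N, bihomog m e B & substTX p B = 0].

(* the j-th entry of  ^t M (t^alpha_1, ..., t^alpha_d)^t *)
Definition col_poly (d : nat) (M : 'M[KX]_d) (alpha : 'I_d -> 'X_{1..3})
  (j : 'I_d) : KtX :=
  \sum_(i < d) (M i j)%:MP * 'X_[alpha i].

(* implicitization matrix of phi (square of size d = n.+1, since it has at
   least the column giving P) *)
Definition implicitization_matrix (p : 4.-tuple Kt) (F : KX) (n : nat)
  (M : 'M[KX]_n.+1) : Prop :=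
  (exists (m : nat) (alpha : 'I_n.+1 -> 'X_{1..3}) (eP : nat)
          (dd : 'I_n.+1 -> nat),
     [/\ (1 <= m)%N /\ injective alpha, (forall i, mdeg (alpha i) = m),
         ((1 <= eP)%N /\ bihomog m eP (col_poly M alpha ord0)),
         (forall j : 'I_n.+1, j != ord0 ->
           moving_surface_following p m (dd j) (col_poly M alpha j)) &
         (exists k1 k2 k3 : 'I_n.+1,
           t1 * 'X_[alpha k3] = t3 * 'X_[alpha k1] /\
           t2 * 'X_[alpha k3] = t3 * 'X_[alpha k2])]) /\
  (exists (c : K) (delta : nat),
     [/\ c != 0, (1 <= delta)%N, \det M = c%:MP * F ^+ delta &
         (birational p -> delta = 1%N)]).

End Implicitization.

(* If [det M = c F], the first-column cofactors [C_i] of [M] have degree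
   [deg F - deg P < deg F], so [C_k(p) <> 0] for some [k] by minimality of [F].
   Since the other columns are syzygies of the monomials [t^alpha], Cramer's
   rule makes [(C_i(p))_i] proportional to [(t^alpha_i)_i]; the relations
   [t_1 t^beta_3 = t_3 t^beta_1] and [t_2 t^beta_3 = t_3 t^beta_2] then make
   [(C_beta_1(p), C_beta_2(p), C_beta_3(p))] proportional to [(t_1, t_2, t_3)].
   So [X |-> (C_beta_j(X))_j] is a rational inverse of [phi], which is then
   birational; hence [delta = 1] is impossible. *)

From HB Require Import structures.
From mathcomp Require Import all_boot all_order all_algebra.
From mathcomp Require Import perm mpoly.
Import GRing.Theory.
Local Open Scope ring_scope.

Section HomogeneousPolynomials.
Context {R : comNzRingType} {n : nat}.

Lemma det_dhomog m (A : 'M[{mpoly R[n]}]_m) (d : 'I_m -> nat) :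
  (forall i j, A i j \is (d j).-homog) -> \det A \is (\sum_j d j).-homog.
Proof.
move=> hA; apply: rpred_sum => s _; rewrite rpredMsign.
rewrite [X in _ \is X.-homog](reindex_inj (@perm_inj _ s)) /=.
elim/big_rec2: _ => [|i y1 y2 _ hy]; first exact: dhomog1.
exact: dhomogM.
Qed.

Lemma comp_mpoly_dhomog k (a : {mpoly R[n]}) (lq : n.-tuple {mpoly R[k]}) e D :
  a \is e.-homog -> (forall i, tnth lq i \is D.-homog) ->
  a \mPo lq \is (D * e).-homog.
Proof.
move=> ha hq; rewrite comp_mpolyE big_seq; apply: rpred_sum => m hm.
have <- : mdeg m = e := dhomog_mf ha hm.
apply: dhomogZ; rewrite mdegE big_distrr /=.
elim/big_rec2: _ => [|i y1 y2 _ hy]; first exact: dhomog1.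
by apply: dhomogM => //; apply: dhomogMn.
Qed.

Lemma comp_mpolyA k l (a : {mpoly R[n]}) (lq : n.-tuple {mpoly R[k]})
    (lr : k.-tuple {mpoly R[l]}) :
  (a \mPo lq) \mPo lr = a \mPo [tuple tnth lq i \mPo lr | i < n].
Proof.
rewrite (comp_mpolyE a lq) (comp_mpolyE a) raddf_sum; apply: eq_bigr => m _.
apply: (etrans (comp_mpolyZ _ _ _)); rewrite rmorph_prod; congr (_ *: _); apply: eq_bigr => i _.
by rewrite rmorphXn tnth_mktuple.
Qed.

Lemma comp_mpoly_proportional_vars (a : {mpoly R[n]}) e
    (g : 'I_n -> {mpoly R[n]}) (i0 : 'I_n) (z : {mpoly R[n]}) :
  a \is e.-homog -> (forall i, 'X_i * g i0 = z * g i) ->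
  z ^+ e * (a \mPo [tuple g i | i < n]) = a * g i0 ^+ e.
Proof.
move=> ha hg; rewrite [in RHS](mpolyE a) comp_mpolyE mulr_sumr mulr_suml !big_seq.
apply: eq_bigr => m hm; rewrite -!mul_mpolyC mulrCA -mulrA; congr (_ * _).
have <- : mdeg m = e := dhomog_mf ha hm.
rewrite mdegE -!prodrXr -big_split /= mpolyXE_id -big_split /=.
by apply: eq_bigr => i _; rewrite tnth_mktuple -!exprMn hg.
Qed.

End HomogeneousPolynomials.

Lemma mpolyX_neq0 {n} {R : idomainType} (m : 'X_{1..n}) : ('X_[m] : {mpoly R[n]}) != 0.
Proof.
apply/eqP => X0; have := @mcoeffX n R m m.
by rewrite X0 mcoeff0 eqxx => /eqP; rewrite eq_sym oner_eq0.
Qed.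

(* Cramer's rule for [v^T Q = v_k e_0], where [Q] is [N] with its first column
   replaced by the [k]-th unit vector. *)
Lemma cofactor_col0_syzygy {S : comNzRingType} {d} (N : 'M[S]_d.+1) (v : 'I_d.+1 -> S) :
  (forall j, j != ord0 -> \sum_i N i j * v i = 0) ->
  forall k i, cofactor N k ord0 * v i = v k * cofactor N i ord0.
Proof.
move=> hN k i.
pose Q := \matrix_(a, b) if b == ord0 then (a == k)%:R else N a b.
have cofQ a : cofactor Q a ord0 = cofactor N a ord0.
  rewrite /cofactor; congr (_ * \det _); apply/matrixP => x y.
  by rewrite !mxE eq_sym (negbTE (neq_lift _ _)).
have detQ : \det Q = cofactor N k ord0.
  rewrite (expand_det_col Q ord0) (bigD1 k) //= big1 ?addr0.
    by rewrite mxE !eqxx mul1r cofQ.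
  by move=> a /negbTE ne; rewrite mxE eqxx ne mul0r.
pose vr : 'rV[S]_d.+1 := \row_a v a.
have vrQ b : (vr *m Q) ord0 b = if b == ord0 then v k else 0.
  rewrite mxE; under eq_bigr => a _ do rewrite !mxE.
  case: eqP => [_|/eqP nb].
    rewrite (bigD1 k) //= eqxx mulr1 big1 ?addr0 // => a /negbTE ->.
    by rewrite mulr0.
  by rewrite -[RHS](hN b nb); apply: eq_bigr => a _; rewrite mulrC.
have := congr1 (fun A : 'rV[S]_d.+1 => A ord0 i) (mulmxA vr Q (\adj Q)).
rewrite mul_mx_adj mul_mx_scalar /= !mxE detQ => ->.
rewrite (bigD1 ord0) //= big1 ?addr0; first by rewrite vrQ eqxx mxE cofQ.
by move=> b /negbTE nb; rewrite vrQ nb mul0r.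
Qed.

Lemma proportional_transfer {S : idomainType} {d} {x u : 'I_d -> S} {k a b i j} :
  (forall k' i', u k' * x i' = x k' * u i') -> x k != 0 ->
  a * x i = b * x j -> a * u i = b * u j.
Proof.
move=> xu xk0 abx; apply: (mulIf xk0).
by rewrite -!mulrA !xu !mulrA abx.
Qed.

Section Implicitization.
Context {K : fieldType} {p : 4.-tuple {mpoly K[3]}}.

Lemma col_poly_coeff d (M : 'M[{mpoly K[4]}]_d) alpha :
  injective alpha -> forall i j, (col_poly M alpha j)@_(alpha i) = M i j.
Proof.
move=> alpha_inj i j; rewrite /col_poly raddf_sum (bigD1 i) //= big1 ?addr0.
  by rewrite mcoeffCM mcoeffX eqxx mulr1.
by move=> i' ne; rewrite mcoeffCM mcoeffX inj_eq // (negbTE ne) mulr0.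
Qed.

Lemma substTX_col_poly d (M : 'M[{mpoly K[4]}]_d) alpha j :
  substTX p (col_poly M alpha j) = \sum_i substX p (M i j) * 'X_[alpha i].
Proof.
rewrite /substTX (_ : substX p = comp_mpoly p) // raddf_sum; apply: eq_bigr => i _.
have mmapZX c m : mmap (comp_mpoly p) (fun i => 'X_i) (c *: 'X_[m]) = (c \mPo p) * 'X_[m].
  by rewrite mmapZ mmapX mmap1_id.
by rewrite mul_mpolyC; exact: mmapZX.
Qed.

(* The map [X |-> (q_i(X))_i] inverts [phi]: [q(p(t))] is proportional to [t]. *)
Lemma birational_of_rational_inverse D (q : 3.-tuple {mpoly K[4]})
    (z : {mpoly K[3]}) (i0 : 'I_3) :
  (forall i, tnth q i \is D.-homog) -> z != 0 -> substX p (tnth q i0) != 0 ->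
  (forall i, 'X_i * substX p (tnth q i0) = z * substX p (tnth q i)) ->
  birational p.
Proof.
move=> qh z0 qi0 qX a b e ha hb b0.
have ga := comp_mpoly_proportional_vars a e _ i0 z ha qX.
have gb := comp_mpoly_proportional_vars b e _ i0 z hb qX.
exists (a \mPo q), (b \mPo q), (D * e)%N; rewrite /substX !comp_mpolyA; split.
- exact: comp_mpoly_dhomog.
- exact: comp_mpoly_dhomog.
- apply: contra_neq b0 => b0; move: gb; rewrite b0 mulr0 => /esym/eqP.
  by rewrite mulf_eq0 expf_eq0 (negbTE qi0) andbF orbF => /eqP.
- apply: (mulfI (expf_neq0 e z0)).
  by rewrite [LHS]mulrCA gb [RHS]mulrCA ga mulrCA.
Qed.

Context {n : nat} {M : 'M[{mpoly K[4]}]_n.+1} {alpha : 'I_n.+1 -> 'X_{1..3}}.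

Local Notation u i := (substX p (cofactor M i ord0)).

Lemma cofactor_col0_proportional_monomials :
  (forall j, j != ord0 -> substTX p (col_poly M alpha j) = 0) ->
  forall k i, u k * 'X_[alpha i] = 'X_[alpha k] * u i.
Proof.
move=> follows k i.
have syz j : j != ord0 ->
    \sum_i' map_mx (comp_mpoly p) M i' j * 'X_[alpha i'] = 0.
  move=> nj; rewrite -[RHS](follows j nj) substTX_col_poly.
  by apply: eq_bigr => i' _; rewrite mxE.
by have := cofactor_col0_syzygy _ _ syz k i; rewrite !cofactor_map_mx.
Qed.

Lemma cofactor_col0_dhomog {d : 'I_n.+1 -> nat} :
  (forall i j, M i j \is (d j).-homog) ->
  forall k, cofactor M k ord0 \is (\sum_(j < n) d (lift ord0 j)).-homog.
Proof. by move=> Mh k; rewrite rpredMsign; apply: det_dhomog => a b; rewrite !mxE. Qed.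

Lemma cofactor_col0_subst_neq0 {F : {mpoly K[4]}} {c : K} {d : 'I_n.+1 -> nat} :
  implicit_equation p F -> c != 0 -> \det M = c%:MP * F ->
  (forall i j, M i j \is (d j).-homog) -> (0 < d ord0)%N ->
  exists k, u k != 0.
Proof.
move=> [[F_size _] [dF [F_homog [_ F_min]]]] c0 detM Mh d0.
have F0 : F != 0 by apply: contraTneq F_size => ->; rewrite msize0.
have det0 : \det M != 0 by rewrite detM mulf_neq0 ?mpolyC_eq0.
have deg_det : (d ord0 + \sum_(j < n) d (lift ord0 j))%N = dF.
  apply: (dhomog_uniq det0); first by rewrite -big_ord_recl; apply: det_dhomog.
  by rewrite detM mul_mpolyC dhomogZ.
have [k cof0] : exists k, cofactor M k ord0 != 0.
  apply/existsP; apply: contra_neqT det0 => /existsPn cof0.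
  rewrite (expand_det_col M ord0) big1 // => i _.
  by rewrite (eqP (negbNE (cof0 i))) mulr0.
exists k; apply/eqP => cofp0.
have := F_min _ _ cof0 (cofactor_col0_dhomog Mh k) cofp0.
by rewrite -deg_det -[X in (_ <= X)%N]add0n leq_add2r leqNgt d0.
Qed.

End Implicitization.

Lemma ord3P (P : 'I_3 -> Prop) : P (inord 0) -> P (inord 1) -> P (inord 2) -> forall i, P i.
Proof.
move=> P0 P1 P2 i; have := ltn_ord i.
by case: i => [[|[|[|?]]] Hi] _ //; [move: P0 | move: P1 | move: P2];
  congr P; apply: val_inj; rewrite /= inordK.
Qed.

Lemma birational_of_implicitization_det_linear (K : fieldType)
    (p : 4.-tuple {mpoly K[3]}) (F : {mpoly K[4]}) n (M : 'M[{mpoly K[4]}]_n.+1)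
    (c : K) :
  implicitization_matrix p F M -> implicit_equation p F -> c != 0 ->
  \det M = c%:MP * F -> birational p.
Proof.
move=> [[m [alpha [eP [dd [[_ alpha_inj] _ [eP1 [_ P_coef_homog]] follows
  [k1 [k2 [k3 [t1k t2k]]]]]]]]] _] hF c0 detM.
pose d j := if j == ord0 then eP else dd j.
have Mh i j : M i j \is (d j).-homog.
  rewrite -(col_poly_coeff _ M alpha alpha_inj) /d.
  case: eqP => [->|/eqP nj]; first exact: P_coef_homog.
  by case: (follows j nj) => _ _ [_ ?] _.
have [k uk0] := cofactor_col0_subst_neq0 hF c0 detM Mh eP1.
have vanish j : j != ord0 -> substTX p (col_poly M alpha j) = 0.
  by move=> /follows [].
have rel := cofactor_col0_proportional_monomials vanish.
have xk0 : ('X_[alpha k] : {mpoly K[3]}) != 0 := mpolyX_neq0 _.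
have uk3 : substX p (cofactor M k3 ord0) != 0.
  apply: contra_neq uk0 => u3; apply: (mulIf (mpolyX_neq0 (alpha k3))).
  by rewrite rel u3 mulr0 mul0r.
pose q := [tuple cofactor M k1 ord0; cofactor M k2 ord0; cofactor M k3 ord0].
have [q0 q1 q2] : [/\ tnth q (inord 0) = cofactor M k1 ord0,
  tnth q (inord 1) = cofactor M k2 ord0 & tnth q (inord 2) = cofactor M k3 ord0].
  by rewrite !(tnth_nth 0) !inordK.
apply: (birational_of_rational_inverse (\sum_(j < n) d (lift ord0 j)) q (t3 K) (inord 2)).
- by apply: ord3P; rewrite ?q0 ?q1 ?q2; apply: cofactor_col0_dhomog.
- exact: mpolyX_neq0.
- by rewrite q2; exact: uk3.
- apply: ord3P; rewrite q2 ?q0 ?q1.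
  + exact: (proportional_transfer rel xk0 t1k).
  + exact: (proportional_transfer rel xk0 t2k).
  + by [].
Qed.

Theorem corollary4p3 (K : fieldType) (charK0 : [pchar K] =i pred0)
  (p : 4.-tuple {mpoly K[3]}) (F : {mpoly K[4]})
  (hp : same_degree_homog p) (hfin : generically_finite p)
  (hF : implicit_equation p F)
  (n : nat) (M : 'M[{mpoly K[4]}]_n.+1) :
  implicitization_matrix p F M -> ~ birational p ->
  exists (c : K) (delta : nat),
    [/\ c != 0, (1 < delta)%N & \det M = c%:MP * F ^+ delta].
Proof.
move=> hM nbir; have [_ [c [[|[|delta]] [c0 delta_gt0 detM _]]]] := hM.
- by [].
- rewrite expr1 in detM; case: nbir.
  exact: birational_of_implicitization_det_linear hM hF c0 detM.
- by exists c, delta.+2.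
Qed.
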